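(* Let $(\mathcal{D}_i)$ be an infinite family of symmetric designs with parameters $(v_i,k_i,\lambda_i)$ and orders $q_i=k_i-\lambda_i\ge 2$, in which $v_i$ is bounded above by a linear function of $q_i$ (i.e. $v_i=O(q_i)$), and let $\Gamma_i$ be the incidence graph of $\mathcal{D}_i$, with $n_i=2v_i$ vertices. Then $\mu(\Gamma_i)=\Theta(\log n_i)$.
   Context: A symmetric design with parameters $(v,k,\lambda)$ is a pair $(X,\mathcal{B})$ where $X$ is a set of $v$ points and $\mathcal{B}$ is a family of $k$-subsets of $X$ (blocks) such that any two distinct points lie in exactly $\lambda$ blocks and any two distinct blocks meet in exactly $\lambda$ points. Its order is $q=k-\lambda$. Its incidence graph is the bipartite graph on $X\cup\mathcal{B}$ with $x$ adjacent to $B$ iff $x\in B$. A resolving set of a connected graph is a set $S$ of vertices such that for any two distinct vertices $u,w$ some $s\in S$ has $d(u,s)\neq d(w,s)$; the metric dimension $\mu(\Gamma)$ is the minimum size of a resolving set. *)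

From mathcomp Require Import all_boot.
From Stdlib Require Import Reals.
Set Implicit Arguments. Unset Strict Implicit. Unset Printing Implicit Defensive.

Definition symmetric_design (X : finType) (Bs : {set {set X}}) (k lam : nat) : Prop :=
  [/\ #|Bs| = #|X|,
      (forall B, B \in Bs -> #|B| = k),
      (forall x y : X, x != y -> #|[set B in Bs | (x \in B) && (y \in B)]| = lam)
    & (forall B B', B \in Bs -> B' \in Bs -> B != B' -> #|B :&: B'| = lam)].

Definition block_of (X : finType) (Bs : {set {set X}}) := {B : {set X} | B \in Bs}.
Definition inc_vertex (X : finType) (Bs : {set {set X}}) := (X + block_of Bs)%type.

Definition incidence_rel (X : finType) (Bs : {set {set X}}) : rel (inc_vertex Bs) :=
  fun u w => match u, w with
             | inl x, inr B => x \in val B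
             | inr B, inl x => x \in val B
             | _, _ => false
             end.

Arguments incidence_rel {X} Bs.

Fixpoint ball (T : finType) (e : rel T) (x : T) (r : nat) : {set T} :=
  match r with
  | 0 => [set x]
  | r'.+1 => ball e x r' :|: [set y | [exists z in ball e x r', e z y]]
  end.

(* d(x,y) = least r with y within distance r of x (equal to #|T| if unreachable,
   which never happens in a connected graph). *)
Definition dist (T : finType) (e : rel T) (x y : T) : nat :=
  find (fun r => y \in ball e x r) (iota 0 #|T|).

Definition resolving (T : finType) (e : rel T) (S : {set T}) : bool :=
  [forall u, forall w, (u != w) ==> [exists s in S, dist e u s != dist e w s]].

(* Metric dimension: minimum size of a resolving set (setT is always resolving). *)
Definition metric_dim (T : finType) (e : rel T) : nat :=
  #|[arg min_(S < [set: T] | resolving e S) #|S|]|.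

From mathcomp Require Import all_boot.
From Stdlib Require Import Reals Lra.
(* [Reals] rebinds [^] on [nat] to [Nat.pow] and shadows [dist] and [ball]: restore
   [expn] and the graph notions of [Defs]. *)
From mathcomp Require Import ssrnat zify.
From Pilot Require Import Defs.
Set Implicit Arguments. Unset Strict Implicit. Unset Printing Implicit Defensive.

(* Since k(k - 1) = (v - 1)lam and k >= 2, any two points lie on a common block and any
   two blocks meet, so the incidence graph has diameter at most 3: a resolving set S
   injects the 2v vertices into {0,1,2,3}^S, whence 2v <= 4^mu.
   Conversely, two distinct points are separated by exactly 2(k - lam) of the v blocks,
   and two distinct blocks by exactly 2(k - lam) of the v points.  If v <= A(k - lam)
   and m = 2A(log2 v + 1), then v^2 (v - 2(k - lam))^m < v^m, so counting m-tuples gives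
   m blocks separating every pair of points and m points separating every pair of
   blocks.  Points lie at even distance from points and at odd distance from blocks,
   so these 2m vertices resolve the graph and mu <= 4A(log2 v + 1). *)

Section GraphDistance.
Variables (T : finType) (e : rel T).

Lemma ball_center u : u \in ball e u 0.
Proof. by rewrite set11. Qed.

Lemma ball_succ u r z y : z \in ball e u r -> e z y -> y \in ball e u r.+1.
Proof. by move=> zr ezy; rewrite !inE; apply/orP; right; apply/existsP; exists z; rewrite zr. Qed.

Lemma ball_mono u r r' : r <= r' -> ball e u r \subset ball e u r'.
Proof.
elim: r' => [|r' IH]; first by rewrite leqn0 => /eqP ->.
rewrite leq_eqVlt ltnS => /predU1P [-> //|/IH sub].
exact: subset_trans sub (subsetUl _ _).
Qed.

Lemma dist_le u w r : w \in ball e u r -> dist e u w <= r.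
Proof.
move=> wr; have [r_small|r_big] := ltnP r #|T|; last first.
  by apply: leq_trans (find_size _ _) _; rewrite size_iota.
rewrite leqNgt; apply/negP => /(before_find 0).
by rewrite nth_iota // add0n wr.
Qed.

Lemma mem_ball_dist u w : dist e u w < #|T| -> w \in ball e u (dist e u w).
Proof.
move=> dist_small; have reach : has (fun r => w \in ball e u r) (iota 0 #|T|).
  by rewrite has_find size_iota.
by have := nth_find 0 reach; rewrite nth_iota ?add0n // -(size_iota 0 #|T|) -has_find.
Qed.

Lemma distE u w r : r < #|T| -> w \in ball e u r ->
  (forall r', r' < r -> w \notin ball e u r') -> dist e u w = r.
Proof.
move=> r_small wr w_far; apply/eqP; rewrite eqn_leq dist_le //= leqNgt.
apply/negP => lt_dist_r; have := w_far _ lt_dist_r.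
by rewrite mem_ball_dist // (ltn_trans lt_dist_r).
Qed.

Lemma dist_eq0 u w : (dist e u w == 0) = (u == w).
Proof.
have card_gt0 : 0 < #|T| by apply/card_gt0P; exists u.
apply/eqP/eqP => [dist0|<-]; last by apply: distE => //; exact: ball_center.
have : dist e u w < #|T| by rewrite dist0.
by move/mem_ball_dist; rewrite dist0 inE => /eqP.
Qed.

Lemma dist_refl u : dist e u u = 0.
Proof. by apply/eqP; rewrite dist_eq0. Qed.

Lemma dist_eq1 u w : u != w -> (dist e u w == 1) = e u w.
Proof.
move=> neq_uw; have card_gt1 : 1 < #|T| by apply/card_gt1P; exists u, w.
apply/eqP/idP => [dist1|euw].
  have := mem_ball_dist (_ : dist e u w < #|T|); rewrite dist1 => /(_ card_gt1).
  rewrite !inE eq_sym (negbTE neq_uw) /= => /existsP [z].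
  by rewrite inE => /andP [/eqP ->].
apply: distE => //; first exact: ball_succ (ball_center u) euw.
by case=> // _; rewrite inE eq_sym.
Qed.

Lemma resolvingT : resolving e [set: T].
Proof.
apply/forallP => u; apply/forallP => w; apply/implyP => neq_uw.
by apply/existsP; exists u; rewrite inE dist_refl eq_sym dist_eq0 eq_sym.
Qed.

Lemma metric_dim_min S : resolving e S -> metric_dim e <= #|S|.
Proof.
by move=> resS; rewrite /metric_dim; case: arg_minnP => [|M _]; [exact: resolvingT | apply].
Qed.

Lemma card_le_expn_metric_dim d :
  (forall u w, dist e u w <= d) -> #|T| <= d.+1 ^ metric_dim e.
Proof.
move=> dist_le_d; rewrite /metric_dim.
case: arg_minnP => [|S resS _]; first exact: resolvingT.
pose profile u : {ffun 'I_#|S| -> 'I_d.+1} := [ffun j => inord (dist e u (enum_val j))].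
rewrite -[d.+1]card_ord -[X in _ ^ X]card_ord -card_ffun.
apply: (leq_card profile) => u w eq_uw.
apply/eqP; apply: contraT => neq_uw.
have /exists_inP [s sS /eqP[]] := implyP (forallP (forallP resS u) w) neq_uw.
move/ffunP: eq_uw => /(_ (enum_rank_in sS s)) /(congr1 val).
by rewrite !ffunE enum_rankK_in // /= !inordK ?ltnS ?dist_le_d.
Qed.

End GraphDistance.

Lemma card_sum_indicator (T : finType) (A : {pred T}) : #|A| = \sum_x (x \in A).
Proof. by rewrite -sum1_card big_mkcond. Qed.

Lemma double_counting (I J : finType) (R : I -> J -> bool) :
  \sum_i #|[set j | R i j]| = \sum_j #|[set i | R i j]|.
Proof.
under eq_bigr => i _ do rewrite -sum1dep_card big_mkcond.
by rewrite exchange_big; apply: eq_bigr => j _; rewrite -sum1dep_card [RHS]big_mkcond.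
Qed.

Lemma card_set_eqb (T : finType) (D : {set T}) (P Q : pred T) :
  #|[set z in D | P z == Q z]| + #|[set z in D | P z]| + #|[set z in D | Q z]|
  = #|D| + 2 * #|[set z in D | P z && Q z]|.
Proof.
rewrite !card_sum_indicator -!big_split big_distrr -big_split /=.
by apply: eq_bigr => z _; rewrite !inE; case: (z \in D); case: (P z); case: (Q z).
Qed.

Lemma exists_ffun_hitting (T U : finType) (D : {pred U}) (G : U -> {set T}) m s :
  (forall u, u \in D -> #|~: G u| <= s) -> #|D| * s ^ m < #|T| ^ m ->
  exists f : {ffun 'I_m -> T}, forall u, u \in D -> exists i, f i \in G u.
Proof.
move=> small_miss few_pairs.
have [f /forall_inP hit_f|all_miss] :=
  pickP [pred f : {ffun 'I_m -> T} | [forall u in D, [exists i, f i \in G u]]].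
  by exists f => u /hit_f /existsP.
suff : \sum_(f : {ffun 'I_m -> T}) 1 <= #|D| * s ^ m.
  by rewrite sum1_card card_ffun card_ord leqNgt few_pairs.
apply: (@leq_trans (\sum_(f : {ffun 'I_m -> T}) \sum_(u in D) (f \in ffun_on (~: G u)))).
  apply: leq_sum => f _; have /forall_inPn [u uD] := negbT (all_miss f).
  rewrite negb_exists => /forallP miss; rewrite (bigD1 u) //=.
  suff -> : f \in ffun_on (~: G u) by [].
  by apply/ffun_onP => i; rewrite inE miss.
rewrite exchange_big -sum_nat_const /=; apply: leq_sum => u uD.
rewrite -card_sum_indicator card_ffun_on card_ord.
by have [->|m_gt0] := posnP m; rewrite ?expn0 ?leq_exp2r ?small_miss.
Qed.

Lemma exists_separating_set (U W : finType) (R : U -> W -> bool) m s :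
  (forall u u', u != u' -> #|[set w | R u w == R u' w]| <= s) ->
  #|U| * #|U| * s ^ m < #|W| ^ m ->
  exists2 C : {set W}, #|C| <= m &
    forall u u', u != u' -> exists2 w, w \in C & R u w != R u' w.
Proof.
move=> small_agree few_pairs.
pose D := [pred p : U * U | p.1 != p.2].
have small_miss (p : U * U) : p \in D -> #|~: [set w | R p.1 w != R p.2 w]| <= s.
  case: p => u u' /= neq_uu'.
  rewrite (eq_card (B := [set w | R u w == R u' w])) ?small_agree // => w.
  by rewrite !inE negbK.
have few_D : #|D| * s ^ m < #|W| ^ m.
  by apply: leq_ltn_trans few_pairs; rewrite leq_mul2r -card_prod max_card orbT.
have [f hit_f] := exists_ffun_hitting small_miss few_D.
exists [set f i | i in 'I_m]; first by rewrite (leq_trans (leq_imset_card _ _)) ?card_ord.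
move=> u u' neq_uu'; have [i] := hit_f (u, u') neq_uu'.
by rewrite inE => sep; exists (f i); rewrite ?imset_f.
Qed.

Lemma bernoulli_expn n k : n ^ k.+1 + k.+1 * n ^ k <= n.+1 ^ k.+1.
Proof.
elim: k => [|k IH]; first by rewrite !expn1 expn0; lia.
rewrite (expnS n k.+1) (expnS n.+1 k.+1) (expnS n k); rewrite expnS in IH.
set a := n ^ k in IH *; set b := n.+1 ^ k.+1 in IH *; nia.
Qed.

Lemma double_expn_le a : 2 * a ^ a.+1 <= a.+1 ^ a.+1.
Proof. by have := bernoulli_expn a a; rewrite expnS; nia. Qed.

Lemma sqr_mul_expn_subn_lt v q A j : 0 < v -> v * v < 2 ^ j -> v <= A * q ->
  v * v * (v - 2 * q) ^ (A * j) < v ^ (A * j).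
Proof.
move=> v_gt0 vv_lt; case: A => [|a] v_le; first by move: v_le; rewrite mul0n leqNgt v_gt0.
have j_gt0 : 0 < j by case: j vv_lt => //; rewrite expn0; nia.
set m := a.+1 * j; have m_gt0 : 0 < m by rewrite muln_gt0.
have pow2_le : 2 ^ j * a ^ m <= a.+1 ^ m.
  have : (2 * a ^ a.+1) ^ j <= (a.+1 ^ a.+1) ^ j by rewrite leq_exp2r // double_expn_le.
  by rewrite expnMn -!expnM.
have vv_lt_A : v * v * a ^ m < a.+1 ^ m.
  have [->|pos] := posnP (a ^ m); first by rewrite muln0 expn_gt0.
  by apply: leq_trans pow2_le; rewrite ltn_pmul2r.
have miss_le : (v - 2 * q) * a.+1 <= a * v by nia.
have Am_gt0 : 0 < a.+1 ^ m by rewrite expn_gt0.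
rewrite -(ltn_pmul2r Am_gt0) -mulnA -expnMn.
apply: (@leq_ltn_trans (v * v * (a * v) ^ m)).
  by rewrite leq_mul2l leq_exp2r ?miss_le ?orbT.
by rewrite expnMn mulnA [X in _ < X]mulnC ltn_pmul2r // expn_gt0 v_gt0.
Qed.

Section SymmetricDesign.
Variables (X : finType) (Bs : {set {set X}}) (k lam : nat).
Hypothesis design : symmetric_design Bs k lam.

Lemma card_points_agree B B' : B \in Bs -> B' \in Bs -> B != B' ->
  #|[set z | (z \in B) == (z \in B')]| = #|X| - 2 * (k - lam).
Proof.
move=> BBs B'Bs neq_BB'; case: design => _ card_B _ card_meet.
have lam_le_k : lam <= k.
  by rewrite -(card_meet B B') // -(card_B B) // subset_leq_card ?subsetIl.
have card_mem (C : {set X}) : C \in Bs -> #|[set z in [set: X] | z \in C]| = k.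
  by move=> CBs; rewrite -(card_B C CBs); apply: eq_card => z; rewrite !inE.
have card_meetT : #|[set z in [set: X] | (z \in B) && (z \in B')]| = lam.
  by rewrite -(card_meet B B') //; apply: eq_card => z; rewrite !inE.
have card_agreeT : #|[set z in [set: X] | (z \in B) == (z \in B')]|
                   = #|[set z | (z \in B) == (z \in B')]|.
  by apply: eq_card => z; rewrite !inE.
have := card_set_eqb [set: X] (fun z => z \in B) (fun z => z \in B').
by rewrite card_agreeT !card_mem // card_meetT cardsT; lia.
Qed.

Hypothesis k_gt1 : 1 < k.

Definition replication (x : X) := #|[set B in Bs | x \in B]|.

Lemma replication_count x : replication x * k = replication x + #|X|.-1 * lam.
Proof.
case: design => _ card_B card_pair _.
have -> : replication x * k = \sum_B #|[set y | [&& B \in Bs, x \in B & y \in B]]|.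
  rewrite /replication -sum_nat_const big_mkcond /=; apply: eq_bigr => B _.
  rewrite inE; case: (boolP (B \in Bs)) => [BBs|_]; last by rewrite cards0.
  case: ifP => /= [xB|xNB]; last by apply/esym/eq_card0 => y; rewrite !inE xNB.
  by rewrite -(card_B B BBs); apply: eq_card => y; rewrite !inE xB.
rewrite double_counting (bigD1 x) //=; congr (_ + _).
  by apply: eq_card => B; rewrite !inE andbb.
rewrite -(cardC1 x) -sum_nat_const; apply: eq_big => [y|y neq_yx]; first by rewrite !inE.
by rewrite -(card_pair x y) 1?eq_sym //; apply: eq_card => B; rewrite !inE.
Qed.

Lemma sum_replication_block B0 :
  B0 \in Bs -> \sum_(x in B0) replication x = k + #|X|.-1 * lam.
Proof.
move=> B0Bs; case: design => card_Bs card_B _ card_meet.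
have <- : \sum_x #|[set B | [&& x \in B0, B \in Bs & x \in B]]| = \sum_(x in B0) replication x.
  rewrite [RHS]big_mkcond /=; apply: eq_bigr => x _.
  by case: ifP => [xB0|xNB0]; [apply: eq_card => B | apply: eq_card0 => B];
    rewrite !inE ?xB0 ?xNB0.
rewrite double_counting (bigD1 B0) //=; congr (_ + _).
  by rewrite -(card_B B0 B0Bs); apply: eq_card => y; rewrite !inE B0Bs andbb.
rewrite -card_Bs (cardsD1 B0 Bs) B0Bs /= -sum_nat_const big_mkcond [RHS]big_mkcond /=.
apply: eq_bigr => B _; rewrite !inE; case: eqP => [//|/eqP neq_BB0] /=.
case: (boolP (B \in Bs)) => [BBs|_]; last by apply: eq_card0 => y; rewrite !inE andbF.
by rewrite -(card_meet B0 B) 1?eq_sym //; apply: eq_card => y; rewrite !inE BBs.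
Qed.

Lemma replication_k x : replication x = k.
Proof.
have replication_const y : replication y = replication x.
  have := replication_count y; have := replication_count x.
  case: k k_gt1 => // k' k'_gt0; rewrite !mulnS => eq_x eq_y.
  by apply/eqP; rewrite -(eqn_pmul2r k'_gt0); apply/eqP; lia.
have [B0 B0Bs] : exists B0, B0 \in Bs.
  case: design => card_Bs _ _ _; apply/set0Pn.
  by rewrite -card_gt0 card_Bs; apply/card_gt0P; exists x.
have := sum_replication_block B0Bs.
rewrite (eq_bigr (fun=> replication x)) ?sum_nat_const => [|y _]; last exact: replication_const.
case: design => _ card_B _ _; rewrite (card_B B0 B0Bs); have := replication_count x; nia.
Qed.

Lemma lam_gt0 : 0 < #|X| -> 0 < lam.
Proof.
case/card_gt0P => x _; have := replication_count x; rewrite replication_k.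
by case: lam => // ; nia.
Qed.

Lemma card_blocks_agree x y : x != y ->
  #|[set B in Bs | (x \in B) == (y \in B)]| = #|X| - 2 * (k - lam).
Proof.
move=> neq_xy; case: design => card_Bs _ card_pair _.
have lam_le_k : lam <= k.
  rewrite -(card_pair x y neq_xy) -(replication_k x) subset_leq_card //.
  by apply/subsetP => B; rewrite !inE => /andP [-> /andP [-> _]].
have := card_set_eqb Bs (fun B => x \in B) (fun B => y \in B).
have := replication_k x; have := replication_k y; rewrite /replication.
by rewrite (card_pair x y neq_xy) card_Bs => -> ->; lia.
Qed.

End SymmetricDesign.

Section IncidenceGraph.
Variables (X : finType) (Bs : {set {set X}}) (k lam : nat).
Hypothesis design : symmetric_design Bs k lam.
Hypothesis order_ge2 : 2 <= k - lam.

Local Notation T := (inc_vertex Bs).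
Local Notation e := (incidence_rel Bs).

Let k_gt1 : 1 < k. Proof. exact: leq_trans order_ge2 (leq_subr _ _). Qed.

Lemma card_block_of : #|{: block_of Bs}| = #|X|.
Proof.
by case: design => card_Bs _ _ _; rewrite card_sig -card_Bs; apply: eq_card => B; rewrite !inE.
Qed.

Lemma card_inc_vertex : #|{: T}| = 2 * #|X|.
Proof. by rewrite card_sum card_block_of addnn -mul2n. Qed.

Lemma card_block_of_set (P : pred {set X}) :
  #|[set B : block_of Bs | P (val B)]| = #|[set B in Bs | P B]|.
Proof.
rewrite -(card_imset _ val_inj); apply: eq_card => B; rewrite inE.
apply/imsetP/andP => [[B' PB' ->]|[BBs PB]].
  by split; [exact: valP | rewrite inE in PB'].
by exists (exist _ B BBs); rewrite ?inE.
Qed.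

Lemma exists_common_block x y : exists C : block_of Bs, (x \in val C) && (y \in val C).
Proof.
suff /set0Pn [B] : [set B in Bs | (x \in B) && (y \in B)] != set0.
  by rewrite inE => /andP [BBs xyB]; exists (exist _ B BBs).
rewrite -card_gt0; case: (eqVneq x y) => [<-|neq_xy].
  rewrite (eq_card (B := [set B in Bs | x \in B])) => [|B]; last by rewrite !inE andbb.
  by rewrite -/(replication Bs x) (replication_k design k_gt1); lia.
case: design => _ _ card_pair _; rewrite card_pair //.
by apply: (lam_gt0 design k_gt1); apply/card_gt0P; exists x.
Qed.

Lemma exists_common_point (B B' : block_of Bs) : exists z, (z \in val B) && (z \in val B').
Proof.
suff /set0Pn [z] : val B :&: val B' != set0 by rewrite inE; exists z.
case: design => card_Bs card_B _ card_meet; rewrite -card_gt0.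
case: (eqVneq B B') => [<-|neq_BB']; first by rewrite setIid card_B ?(valP B) //; lia.
have neq_val : val B != val B' by apply: contra neq_BB' => /eqP /val_inj ->.
rewrite card_meet ?(valP B) ?(valP B') //.
apply: (lam_gt0 design k_gt1); rewrite -card_Bs.
by apply/card_gt0P; exists (val B); exact: valP.
Qed.

Lemma incidence_dist_le3 u w : dist e u w <= 3.
Proof.
have path2 a b c : e a b -> e b c -> c \in ball e a 3.
  move=> eab ebc; apply: (subsetP (ball_mono _ _ (isT : 2 <= 3))).
  exact: ball_succ (ball_succ (ball_center _ _) eab) ebc.
have path3 a b c d : e a b -> e b c -> e c d -> d \in ball e a 3.
  move=> eab ebc ecd.
  exact: ball_succ (ball_succ (ball_succ (ball_center _ _) eab) ebc) ecd.
apply: dist_le; case: u => [x|B]; case: w => [y|B'].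
- by have [C /andP [xC yC]] := exists_common_block x y; apply: (@path2 _ (inr C)).
- have [z /andP [zB' _]] := exists_common_point B' B'.
  by have [C /andP [xC zC]] := exists_common_block x z; apply: (@path3 _ (inr C) (inl z)).
- have [z /andP [zB _]] := exists_common_point B B.
  by have [C /andP [zC yC]] := exists_common_block z y; apply: (@path3 _ (inl z) (inr C)).
- by have [z /andP [zB zB']] := exists_common_point B B'; apply: (@path2 _ (inl z)).
Qed.

Lemma metric_dim_incidence_ge : 2 * #|X| <= 4 ^ metric_dim e.
Proof. by rewrite -card_inc_vertex; apply: card_le_expn_metric_dim incidence_dist_le3. Qed.

Lemma dist_point_block_eq1 x (B : block_of Bs) :
  (dist e (inl x) (inr B) == 1) = (x \in val B).
Proof. exact: dist_eq1. Qed.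

Lemma dist_block_point_eq1 (B : block_of Bs) x :
  (dist e (inr B) (inl x) == 1) = (x \in val B).
Proof. exact: dist_eq1. Qed.

Lemma dist_points x y : x != y -> dist e (inl x) (inl y) = 2.
Proof.
move=> neq_xy; have X_gt1 : 1 < #|X| by apply/card_gt1P; exists x, y.
have [C /andP [xC yC]] := exists_common_block x y.
apply: distE; first by rewrite card_inc_vertex; lia.
  exact: ball_succ (ball_succ (ball_center _ _) (_ : e (inl x) (inr C))) (_ : e _ (inl y)).
case=> [|[|//]] _; rewrite !inE; first by apply: contra neq_xy => /eqP [->].
apply/negP => /orP [/eqP [eq_yx]|/existsP [z]]; first by rewrite eq_yx eqxx in neq_xy.
by rewrite inE => /andP [/eqP ->].
Qed.

Lemma card_points_gt1 (B : block_of Bs) : 1 < #|X|.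
Proof.
by case: design => _ card_B _ _; apply: leq_trans k_gt1 _; rewrite -(card_B _ (valP B)) max_card.
Qed.

Lemma dist_block_point_neq2 (B : block_of Bs) p : dist e (inr B) (inl p) != 2.
Proof.
have X_gt1 := card_points_gt1 B.
apply/eqP => dist2.
suff : p \in val B by rewrite -dist_block_point_eq1 dist2.
have : inl p \in ball e (inr B) 2.
  by rewrite -dist2 mem_ball_dist // dist2 card_inc_vertex; lia.
rewrite /= !inE => /orP [/orP [//|/existsP [z]]|/existsP [z]].
  by rewrite inE => /andP [/eqP ->].
rewrite !inE => /andP [/orP [/eqP -> //|/existsP [z']]].
by rewrite inE => /andP [/eqP ->]; case: z.
Qed.

Lemma separating_resolving (P : {set X}) (C : {set block_of Bs}) :
  (forall x y, x != y -> exists2 B, B \in C & (x \in val B) != (y \in val B)) ->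
  (forall B B' : block_of Bs,
      B != B' -> exists2 z, z \in P & (z \in val B) != (z \in val B')) ->
  resolving e (inl @: P :|: inr @: C).
Proof.
set S := _ :|: _; move=> sepC sepP.
have inlS z : z \in P -> inl z \in S by move=> zP; rewrite inE imset_f.
have inrS B : B \in C -> inr B \in S by move=> BC; rewrite inE imset_f ?orbT.
have sep_point_block x B : exists2 s, s \in S & dist e (inl x) s != dist e (inr B) s.
  have /card_gt1P [B1 [B2 [_ _ /sepP [z0 z0P _]]]] : 1 < #|{: block_of Bs}|.
    by rewrite card_block_of; exact: card_points_gt1 B.
  exists (inl z0); first exact: inlS.
  (* A point lies at even distance from points and at odd distance from blocks. *)
  have [<-|neq_xz0] := eqVneq x z0; first by rewrite dist_refl eq_sym dist_eq0.
  by rewrite dist_points // eq_sym dist_block_point_neq2.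
apply/forallP => u; apply/forallP => w; apply/implyP => neq_uw; apply/exists_inP.
case: u w neq_uw => [x|B] [y|B'] neq_uw.
- have [|B BC sepB] := sepC x y; first by apply: contra neq_uw => /eqP ->.
  exists (inr B); first exact: inrS.
  by apply: contra sepB => /eqP dist_eq; rewrite -!dist_point_block_eq1 dist_eq.
- exact: sep_point_block.
- by have [s sS sep] := sep_point_block y B; exists s; rewrite // eq_sym.
- have [|z zP sepz] := sepP B B'; first by apply: contra neq_uw => /eqP ->.
  exists (inl z); first exact: inlS.
  by apply: contra sepz => /eqP dist_eq; rewrite -!dist_block_point_eq1 dist_eq.
Qed.

Lemma metric_dim_incidence_le A : 0 < #|X| -> #|X| <= A * (k - lam) ->
  metric_dim e <= 4 * A * (trunc_log 2 #|X|).+1.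
Proof.
move=> X_gt0 X_le; set m := A * (2 * (trunc_log 2 #|X|).+1).
have few_misses : #|X| * #|X| * (#|X| - 2 * (k - lam)) ^ m < #|X| ^ m.
  apply: sqr_mul_expn_subn_lt => //; rewrite mulnC expnM expnS expn1.
  by apply: ltn_mul; apply: trunc_log_ltn.
have [C card_C sepC] : exists2 C : {set block_of Bs}, #|C| <= m &
    forall x y, x != y -> exists2 B, B \in C & (x \in val B) != (y \in val B).
  apply: (exists_separating_set (s := #|X| - 2 * (k - lam))); last by rewrite card_block_of.
  move=> x y /(card_blocks_agree design k_gt1) <-.
  by rewrite (card_block_of_set (fun B => (x \in B) == (y \in B))).
have [P card_P sepP] : exists2 P : {set X}, #|P| <= m &
    forall B B' : block_of Bs,
      B != B' -> exists2 z, z \in P & (z \in val B) != (z \in val B').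
  apply: (@exists_separating_set (block_of Bs) X _ m (#|X| - 2 * (k - lam))).
    move=> B B' neq_BB' /=.
    have neq_val : val B != val B' by apply: contra neq_BB' => /eqP /val_inj ->.
    exact/eq_leq/(card_points_agree design (valP B) (valP B') neq_val).
  by rewrite card_block_of.
apply: leq_trans (metric_dim_min (separating_resolving sepC sepP)) _.
apply: leq_trans (leq_card_setU _ _).1 _.
apply: leq_trans (leq_add (leq_imset_card _ _) (leq_imset_card _ _)) _.
rewrite /m; lia.
Qed.

End IncidenceGraph.

Lemma INR_expn b n : INR (b ^ n) = (INR b ^ n)%R.
Proof. by elim: n => [|n IH] //; rewrite expnS mult_INR IH. Qed.

Lemma ln_INR_le (a b : nat) : 0 < a -> a <= b -> (ln (INR a) <= ln (INR b))%R.
Proof.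
move=> a_gt0 /leP /le_INR /Rle_lt_or_eq_dec [lt_ab|->]; last exact: Rle_refl.
by apply/Rlt_le/ln_increasing => //; apply/lt_0_INR/ltP.
Qed.

Lemma ln_INR_expn b n : 0 < b -> ln (INR (b ^ n)) = (INR n * ln (INR b))%R.
Proof. by move=> b_gt0; rewrite INR_expn ln_pow //; apply/lt_0_INR/ltP. Qed.

Lemma ln_gt0 x : (1 < x)%R -> (0 < ln x)%R.
Proof. by move=> x_gt1; rewrite -ln_1; apply: ln_increasing; lra. Qed.

(* Stdlib's [ln] is [0] on non-positive arguments. *)
Lemma ln0 : ln 0 = 0%R.
Proof. by rewrite /ln; case: (Rlt_dec 0 0) => // lt00; case: (Rlt_irrefl 0). Qed.

Lemma metric_dim_incidence_ln_bounds (X : finType) (Bs : {set {set X}}) (k lam A : nat) :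
  symmetric_design Bs k lam -> 2 <= k - lam -> #|X| <= A * (k - lam) ->
  (/ ln 4 * ln (INR (2 * #|X|)) <= INR (metric_dim (incidence_rel Bs)))%R /\
  (INR (metric_dim (incidence_rel Bs)) <= 4 * INR A / ln 2 * ln (INR (2 * #|X|)))%R.
Proof.
move=> design order_ge2 X_le.
have ln2_gt0 : (0 < ln 2)%R by apply: ln_gt0; lra.
have ln4_gt0 : (0 < ln 4)%R by apply: ln_gt0; lra.
have [X0|X_gt0] := posnP #|X|.
  have -> : metric_dim (incidence_rel Bs) = 0.
    by apply/eqP; rewrite -leqn0 (leq_trans (max_card _)) // (card_inc_vertex design) X0.
  rewrite X0 muln0 /= ln0; lra.
have n_gt0 : 0 < 2 * #|X| by rewrite muln_gt0.
have INR2 : INR 2 = 2%R by rewrite /=; lra.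
have INR4 : INR 4 = 4%R by rewrite /=; lra.
split.
  have := ln_INR_le n_gt0 (metric_dim_incidence_ge design order_ge2).
  rewrite ln_INR_expn // INR4 => ln_le.
  by apply: (Rmult_le_reg_l (ln 4)) => //; rewrite -Rmult_assoc Rinv_r; lra.
set t := trunc_log 2 #|X|; set L := ln (INR (2 * #|X|)).
have t_le : (INR t.+1 <= L / ln 2)%R.
  apply: (Rmult_le_reg_r (ln 2)) => //; rewrite /Rdiv Rmult_assoc Rinv_l; last lra.
  rewrite Rmult_1_r -INR2 -ln_INR_expn //; apply: ln_INR_le; first by rewrite expn_gt0.
  by rewrite expnS leq_mul2l trunc_logP.
have := le_INR _ _ (leP (metric_dim_incidence_le design order_ge2 X_gt0 X_le)).
rewrite !mult_INR INR4 -/t => mu_le.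
have A_ge0 := pos_INR A.
have -> : (4 * INR A / ln 2 * L = 4 * INR A * (L / ln 2))%R by field; lra.
nra.
Qed.

Lemma linear_bound_nat (v q : nat -> nat) (a b : R) :
  (forall i, 0 < q i) -> (forall i, (INR (v i) <= a * INR (q i) + b)%R) ->
  exists2 A, 0 < A & forall i, v i <= A * q i.
Proof.
move=> q_gt0 v_le; have [A A_gt] := INR_unbounded (Rabs a + Rabs b).
have [[a_le b_le] [a_abs_ge0 b_abs_ge0]] := (Rle_abs a, Rle_abs b, (Rabs_pos a, Rabs_pos b)).
exists A; first by apply/ltP/INR_lt; rewrite /=; lra.
move=> i; apply/leP/INR_le; rewrite mult_INR.
have q_ge1 : (1 <= INR (q i))%R by apply: (le_INR 1); apply/leP.
have := v_le i; nra.
Qed.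

Theorem corollary2p8
  (X : nat -> finType) (Bs : forall i, {set {set X i}}) (k lam : nat -> nat)
  (Hdes : forall i, symmetric_design (Bs i) (k i) (lam i))
  (Hq : forall i, 2 <= k i - lam i)
  (Hlin : exists a b : R, forall i,
      (INR #|X i| <= a * INR (k i - lam i) + b)%R) :
  exists c1 c2 : R, (0 < c1)%R /\ (0 < c2)%R /\
  exists N : nat, forall i, N <= i ->
    (c1 * ln (INR (2 * #|X i|)) <= INR (metric_dim (incidence_rel (Bs i))))%R /\
    (INR (metric_dim (incidence_rel (Bs i))) <= c2 * ln (INR (2 * #|X i|)))%R.
Proof.
case: Hlin => a [b lin].
have [|A A_gt0 X_le] := @linear_bound_nat (fun i => #|X i|) (fun i => k i - lam i) a b _ lin.
  by move=> i; apply: leq_trans (Hq i).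
have ln2_gt0 : (0 < ln 2)%R by apply: ln_gt0; lra.
have ln4_gt0 : (0 < ln 4)%R by apply: ln_gt0; lra.
have A_pos : (0 < INR A)%R by apply/lt_0_INR/ltP.
exists (/ ln 4)%R, (4 * INR A / ln 2)%R; split; first exact: Rinv_0_lt_compat.
split; first by apply: Rdiv_lt_0_compat => //; lra.
by exists 0 => i _; apply: metric_dim_incidence_ln_bounds (Hdes i) (Hq i) (X_le i).
Qed.
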